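(* For every integer $n\geqslant 1$ there exist a family $\mathscr B$ of boxes in $\mathbb R^2$ and two lines $l_1,l_2$ parallel to the $x$-axis such that every box of $\mathscr B$ intersects at least one of $l_1,l_2$, $\nu(\mathscr B)=n$, and $\tau(\mathscr B)=\left[\frac{3n}{2}\right]$.
   Context: A box in $\mathbb R^2$ is a set $[a_1,b_1]\times[a_2,b_2]$ with sides parallel to the coordinate axes. For a family $\mathscr B$ of boxes, $\nu(\mathscr B)$ is the maximal number of pairwise disjoint members of $\mathscr B$, and $\tau(\mathscr B)$ is the minimal number of points in a set meeting every member of $\mathscr B$. $[x]$ denotes the integer part of $x$. *)

From Stdlib Require Import Reals List Arith.
Import ListNotations.
Open Scope R_scope.

(* A box [a1,b1] x [a2,b2] in R^2, represented by ((a1,b1),(a2,b2)). *)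
Definition box : Type := ((R * R) * (R * R))%type.
Definition point : Type := (R * R)%type.

Definition is_box (B : box) : Prop :=
  fst (fst B) <= snd (fst B) /\ fst (snd B) <= snd (snd B).

Definition in_box (p : point) (B : box) : Prop :=
  fst (fst B) <= fst p <= snd (fst B) /\ fst (snd B) <= snd p <= snd (snd B).

Definition disjoint_boxes (B C : box) : Prop :=
  forall p : point, ~ (in_box p B /\ in_box p C).

Definition box_family : Type := box -> Prop.

Definition pairwise_disjoint (L : list box) : Prop :=
  ForallOrdPairs disjoint_boxes L.

Definition nu_eq (F : box_family) (n : nat) : Prop :=
  (exists L : list box, length L = n /\ NoDup L /\ Forall F L /\ pairwise_disjoint L)
  /\ (forall L : list box, NoDup L -> Forall F L -> pairwise_disjoint L ->
        (length L <= n)%nat).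

Definition pierces (P : list point) (F : box_family) : Prop :=
  forall B, F B -> exists p, In p P /\ in_box p B.

Definition tau_eq (F : box_family) (k : nat) : Prop :=
  (exists P : list point, length P = k /\ pierces P F)
  /\ (forall P : list point, pierces P F -> (k <= length P)%nat).

Definition meets_hline (B : box) (c : R) : Prop :=
  fst (snd B) <= c <= snd (snd B).

(** The intersection graph of five boxes arranged in a cycle around the
    corners of a rectangle of width 4 can be a 5-cycle: such a "gadget" has
    [nu = 2] and [tau = 3], and every gadget box meets [y = 0] or [y = 3].
    Placing [n / 2] gadgets side by side, plus one degenerate box when [n] is
    odd, gives a family for which both [nu] and [tau] add up over the pieces,
    because the pieces are separated by vertical lines: a packing or a
    piercing set splits along those lines.  Hence [nu = 2 (n / 2) + (n mod 2) = n]
    and [tau = 3 (n / 2) + (n mod 2) = [3n/2]]. *)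

From Stdlib Require Import Reals List Arith Lra Lia.
Import ListNotations.
Open Scope R_scope.

Lemma ForallOrdPairs_filter {A : Type} (Rel : A -> A -> Prop) (f : A -> bool) (l : list A) :
  ForallOrdPairs Rel l -> ForallOrdPairs Rel (filter f l).
Proof.
  induction 1 as [|a l Ha _ IH]; simpl; [constructor|].
  destruct (f a); [|exact IH].
  constructor; [|exact IH].
  apply Forall_forall; intros x Hx; apply filter_In in Hx as [Hx _].
  exact (proj1 (Forall_forall _ _) Ha x Hx).
Qed.

Lemma ForallOrdPairs_app {A : Type} (Rel : A -> A -> Prop) (l1 l2 : list A) :
  ForallOrdPairs Rel l1 -> ForallOrdPairs Rel l2 ->
  (forall x y, In x l1 -> In y l2 -> Rel x y) -> ForallOrdPairs Rel (l1 ++ l2).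
Proof.
  induction 1 as [|a l Ha _ IH]; intros H2 Hcross; simpl; [exact H2|].
  constructor.
  - apply Forall_app; split; [exact Ha|].
    apply Forall_forall; intros y Hy; apply Hcross; simpl; auto.
  - apply IH; [exact H2|]; intros x y Hx Hy; apply Hcross; simpl; auto.
Qed.

Definition in_box_dec (p : point) (B : box) : {in_box p B} + {~ in_box p B}.
Proof.
  unfold in_box.
  destruct (Rle_dec (fst (fst B)) (fst p)), (Rle_dec (fst p) (snd (fst B))),
    (Rle_dec (fst (snd B)) (snd p)), (Rle_dec (snd p) (snd (snd B)));
    solve [left; tauto | right; tauto].
Defined.

Definition in_boxb (B : box) (p : point) : bool :=
  if in_box_dec p B then true else false.

Lemma in_boxb_spec (B : box) (p : point) : in_boxb B p = true <-> in_box p B.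
Proof. unfold in_boxb; destruct in_box_dec; split; congruence || tauto. Qed.

Lemma disjoint_boxes_of_lt (B C : box) :
  snd (fst B) < fst (fst C) -> disjoint_boxes B C.
Proof. intros H p [[[_ HB] _] [[HC _] _]]; lra. Qed.

Lemma is_box_not_disjoint_self (B : box) : is_box B -> ~ disjoint_boxes B B.
Proof.
  intros [H1 H2] Hd; apply (Hd (fst (fst B), fst (snd B))).
  unfold in_box; simpl; split; lra.
Qed.

Lemma pairwise_disjoint_NoDup (L : list box) :
  Forall is_box L -> pairwise_disjoint L -> NoDup L.
Proof.
  intros Hbox Hd; apply NoDup_iff_ForallOrdPairs.
  induction Hd as [|a l Ha _ IH]; constructor.
  - inversion_clear Hbox as [|? ? Hba _].
    apply Forall_forall; intros b Hb ->.
    exact (is_box_not_disjoint_self b Hba (proj1 (Forall_forall _ _) Ha b Hb)).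
  - inversion_clear Hbox; auto.
Qed.

Lemma filter_in_box_disjoint (B C : box) (Q : list point) :
  disjoint_boxes B C ->
  filter (in_boxb C) (filter (fun p => negb (in_boxb B p)) Q) = filter (in_boxb C) Q.
Proof.
  intros Hd; induction Q as [|p Q IH]; simpl; [reflexivity|].
  destruct (in_boxb B p) eqn:EB, (in_boxb C p) eqn:EC; simpl; rewrite ?EC, ?IH; auto.
  exfalso; apply (Hd p); split; apply in_boxb_spec; assumption.
Qed.

(** Disjoint boxes contain disjoint sets of points of [Q]. *)
Lemma pairwise_disjoint_points_count (k : nat) (Q : list point) (L : list box) :
  pairwise_disjoint L ->
  Forall (fun B => k <= length (filter (in_boxb B) Q))%nat L ->
  (k * length L <= length Q)%nat.
Proof.
  intros Hd; revert Q.
  induction Hd as [|a l Ha _ IH]; intros Q Hk; simpl; [lia|].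
  inversion_clear Hk as [|? ? Hka Hkl].
  rewrite <- (filter_length (in_boxb a) Q).
  enough (k * length l <= length (filter (fun p => negb (in_boxb a p)) Q))%nat by lia.
  apply IH, Forall_forall; intros C HC.
  rewrite filter_in_box_disjoint by exact (proj1 (Forall_forall _ _) Ha C HC).
  exact (proj1 (Forall_forall _ _) Hkl C HC).
Qed.

Lemma two_points_in_box (B : box) (Q : list point) (p q : point) :
  p <> q -> In p Q -> In q Q -> in_box p B -> in_box q B ->
  (2 <= length (filter (in_boxb B) Q))%nat.
Proof.
  intros Hpq Hp Hq HBp HBq.
  change 2%nat with (length [p; q]).
  apply NoDup_incl_length.
  - constructor; [simpl; intros [H|[]]; auto|constructor; [intros []|constructor]].
  - intros x [<-|[<-|[]]]; apply filter_In; split; auto; apply in_boxb_spec; auto.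
Qed.

Definition packing (F : box_family) (L : list box) : Prop :=
  Forall F L /\ pairwise_disjoint L.

Definition family_union (F G : box_family) : box_family := fun B => F B \/ G B.

Definition left_of (F : box_family) (o : R) : Prop := forall B, F B -> snd (fst B) < o.

Definition right_of (G : box_family) (o : R) : Prop := forall B, G B -> o <= fst (fst B).

Lemma pierces_union (F G : box_family) (P1 P2 : list point) :
  pierces P1 F -> pierces P2 G -> pierces (P1 ++ P2) (family_union F G).
Proof.
  intros H1 H2 B [HB|HB];
    [destruct (H1 B HB) as [p [Hp Hin]] | destruct (H2 B HB) as [p [Hp Hin]]];
    exists p; split; auto; apply in_or_app; auto.
Qed.

Section SeparatedUnion.

Variables (F G : box_family) (o : R).
Hypotheses (HF : left_of F o) (HG : right_of G o).

Lemma packing_union (L1 L2 : list box) :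
  packing F L1 -> packing G L2 -> packing (family_union F G) (L1 ++ L2).
Proof.
  intros [HF1 HD1] [HG2 HD2]; split.
  - apply Forall_app; split; eapply Forall_impl; try eassumption; intros B HB;
      [left | right]; exact HB.
  - apply ForallOrdPairs_app; auto; intros B C HB HC.
    apply disjoint_boxes_of_lt.
    pose proof (HF B (proj1 (Forall_forall _ _) HF1 B HB)).
    pose proof (HG C (proj1 (Forall_forall _ _) HG2 C HC)); lra.
Qed.

Lemma packing_union_length_le (a b : nat) :
  (forall B, G B -> is_box B) ->
  (forall L, packing F L -> (length L <= a)%nat) ->
  (forall L, packing G L -> (length L <= b)%nat) ->
  forall L, packing (family_union F G) L -> (length L <= a + b)%nat.
Proof.
  intros Gbox Ha Hb L [HL HD].
  set (is_left (B : box) := if Rlt_dec (snd (fst B)) o then true else false).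
  rewrite <- (filter_length is_left L).
  enough ((length (filter is_left L) <= a)%nat /\
          (length (filter (fun B => negb (is_left B)) L) <= b)%nat) by lia.
  split; [apply Ha | apply Hb]; (split; [|apply ForallOrdPairs_filter, HD]);
    apply Forall_forall; intros B HB; apply filter_In in HB as [HB Hl];
    unfold is_left in Hl; destruct Rlt_dec as [Hlt|Hge]; try discriminate;
    destruct (proj1 (Forall_forall _ _) HL B HB) as [HFB|HGB]; auto; exfalso.
  - pose proof (HG B HGB); destruct (Gbox B HGB); lra.
  - pose proof (HF B HFB); lra.
Qed.

Lemma pierces_union_length_ge (a b : nat) :
  (forall P, pierces P F -> (a <= length P)%nat) ->
  (forall P, pierces P G -> (b <= length P)%nat) ->
  forall P, pierces P (family_union F G) -> (a + b <= length P)%nat.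
Proof.
  intros Ha Hb P HP.
  set (is_left (p : point) := if Rlt_dec (fst p) o then true else false).
  rewrite <- (filter_length is_left P).
  enough ((a <= length (filter is_left P))%nat /\
          (b <= length (filter (fun p => negb (is_left p)) P))%nat) by lia.
  split; [apply Ha | apply Hb]; intros B HB;
    [ destruct (HP B (or_introl HB)) as [p [Hp Hin]]
    | destruct (HP B (or_intror HB)) as [p [Hp Hin]] ];
    exists p; split; auto; apply filter_In; split; auto;
    destruct Hin as [[H1 H2] _]; unfold is_left; destruct Rlt_dec; auto.
  - pose proof (HF B HB); lra.
  - pose proof (HG B HB); lra.
Qed.

End SeparatedUnion.

(** Cyclically consecutive boxes meet exactly at the consecutive points of
    [gadget_corners]; all other pairs are disjoint. *)
Definition gadget (o : R) : list box :=
  [((o, o + 1), (0, 3)); ((o + 1, o + 3), (3, 4)); ((o + 3, o + 4), (1, 3));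
   ((o + 2, o + 4), (0, 1)); ((o + 1, o + 2), (0, 0))].

Definition gadget_corners (o : R) : list point :=
  [(o + 1, 3); (o + 3, 3); (o + 3, 1); (o + 2, 0); (o + 1, 0)].

Definition gadget_family (o : R) : box_family := fun B => In B (gadget o).

Ltac box_arith := unfold in_box, is_box, meets_hline in *; simpl in *; lra.

Ltac gadget_cases := intros B [<-|[<-|[<-|[<-|[<-|[]]]]]].

Lemma gadget_is_box (o : R) (B : box) : gadget_family o B -> is_box B.
Proof. revert B; gadget_cases; box_arith. Qed.

Lemma gadget_meets_hline (o : R) (B : box) :
  gadget_family o B -> meets_hline B 0 \/ meets_hline B 3.
Proof. revert B; gadget_cases; solve [left; box_arith | right; box_arith]. Qed.

Lemma gadget_right_of (o : R) : right_of (gadget_family o) o.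
Proof. unfold right_of; gadget_cases; simpl; lra. Qed.

Lemma gadget_left_of (o : R) : left_of (gadget_family o) (o + 5).
Proof. unfold left_of; gadget_cases; simpl; lra. Qed.

Lemma gadget_packing (o : R) :
  packing (gadget_family o) [((o, o + 1), (0, 3)); ((o + 3, o + 4), (1, 3))].
Proof.
  split.
  - repeat (constructor; [unfold gadget_family; simpl; auto 6|]); constructor.
  - repeat constructor; apply disjoint_boxes_of_lt; simpl; lra.
Qed.

Lemma gadget_packing_length_le (o : R) (L : list box) :
  packing (gadget_family o) L -> (length L <= 2)%nat.
Proof.
  intros [HL HD].
  enough (2 * length L <= length (gadget_corners o))%nat by (simpl in *; lia).
  apply pairwise_disjoint_points_count; [exact HD|].
  eapply Forall_impl; [|exact HL]; clear L HL HD.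
  assert (Hne : forall x y u v : R, x <> u \/ y <> v -> (x, y) <> (u, v))
    by (intros x y u v H E; injection E; lra).
  gadget_cases;
    [ apply (two_points_in_box _ _ (o + 1, 3) (o + 1, 0))
    | apply (two_points_in_box _ _ (o + 1, 3) (o + 3, 3))
    | apply (two_points_in_box _ _ (o + 3, 3) (o + 3, 1))
    | apply (two_points_in_box _ _ (o + 3, 1) (o + 2, 0))
    | apply (two_points_in_box _ _ (o + 2, 0) (o + 1, 0)) ];
    first [apply Hne; lra | solve [simpl; auto 6] | box_arith].
Qed.

Lemma gadget_pierces (o : R) :
  pierces [(o + 1, 3); (o + 3, 1); (o + 1, 0)] (gadget_family o).
Proof.
  gadget_cases;
    solve [exists (o + 1, 3); split; [simpl; auto | box_arith]
          | exists (o + 3, 1); split; [simpl; auto | box_arith]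
          | exists (o + 1, 0); split; [simpl; auto | box_arith]].
Qed.

(** A point lies in at most two gadget boxes, and the two boxes containing a
    point are consecutive; so two points cannot pierce all five. *)
Lemma gadget_pierces_length_ge (o : R) (P : list point) :
  pierces P (gadget_family o) -> (3 <= length P)%nat.
Proof.
  intros HP.
  assert (Hall : Forall (fun B => exists p, In p P /\ in_box p B) (gadget o))
    by (apply Forall_forall; exact HP).
  clear HP; unfold gadget in Hall.
  repeat match goal with H : Forall _ (_ :: _) |- _ => inversion_clear H end.
  repeat match goal with H : exists p, _ |- _ => destruct H as [? [? ?]] end.
  destruct P as [|a [|c [|d P]]]; simpl; [exfalso..|lia];
    repeat match goal with
           | H : In _ [] |- _ => destruct H
           | H : In _ (_ :: _) |- _ => destruct H as [<-|H]
           end; box_arith.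
Qed.

Definition odd_piece (b : bool) : box_family :=
  fun B => b = true /\ B = ((-2, -1), (0, 0)).

Lemma odd_piece_packing_length_le (b : bool) (L : list box) :
  packing (odd_piece b) L -> (length L <= Nat.b2n b)%nat.
Proof.
  intros [HL HD].
  destruct L as [|B1 [|B2 L]]; simpl; [lia| |]; inversion_clear HL as [|? ? [-> ->] HL'].
  - simpl; lia.
  - inversion_clear HL' as [|? ? [_ ->] _]; exfalso.
    inversion_clear HD as [|? ? HD1 _]; inversion_clear HD1 as [|? ? Hd _].
    revert Hd; apply is_box_not_disjoint_self; box_arith.
Qed.

Lemma odd_piece_pierces_length_ge (b : bool) (P : list point) :
  pierces P (odd_piece b) -> (Nat.b2n b <= length P)%nat.
Proof.
  destruct b; simpl; [|lia]; intros HP.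
  destruct (HP _ (conj eq_refl eq_refl)) as [p [Hp _]].
  destruct P; simpl in *; [contradiction | lia].
Qed.

Fixpoint gadget_chain (m : nat) (b : bool) : box_family :=
  match m with
  | O => odd_piece b
  | S k => family_union (gadget_chain k b) (gadget_family (5 * INR k))
  end.

Lemma gadget_chain_left_of (m : nat) (b : bool) : left_of (gadget_chain m b) (5 * INR m).
Proof.
  induction m as [|k IH]; intros B; simpl gadget_chain; rewrite ?S_INR.
  - intros [_ ->]; simpl; lra.
  - intros [HB|HB]; [apply IH in HB | apply gadget_left_of in HB]; lra.
Qed.

Lemma gadget_chain_is_box (m : nat) (b : bool) (B : box) : gadget_chain m b B -> is_box B.
Proof.
  induction m as [|k IH]; simpl.
  - intros [_ ->]; box_arith.
  - intros [HB|HB]; [exact (IH HB) | exact (gadget_is_box _ _ HB)].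
Qed.

Lemma gadget_chain_meets_hline (m : nat) (b : bool) (B : box) :
  gadget_chain m b B -> meets_hline B 0 \/ meets_hline B 3.
Proof.
  induction m as [|k IH]; simpl.
  - intros [_ ->]; left; box_arith.
  - intros [HB|HB]; [exact (IH HB) | exact (gadget_meets_hline _ _ HB)].
Qed.

Lemma gadget_chain_packing (m : nat) (b : bool) :
  exists L, packing (gadget_chain m b) L /\ length L = (2 * m + Nat.b2n b)%nat.
Proof.
  induction m as [|k [L [HL Hlen]]]; simpl gadget_chain.
  - exists (if b then [((-2, -1), (0, 0))] else []).
    destruct b; (split; [split; repeat constructor|reflexivity]).
  - eexists; split.
    + exact (packing_union _ _ _ (gadget_chain_left_of k b) (gadget_right_of _)
               _ _ HL (gadget_packing _)).
    + rewrite length_app, Hlen; simpl; lia.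
Qed.

Lemma gadget_chain_packing_length_le (m : nat) (b : bool) (L : list box) :
  packing (gadget_chain m b) L -> (length L <= 2 * m + Nat.b2n b)%nat.
Proof.
  revert L; induction m as [|k IH]; simpl gadget_chain.
  - apply odd_piece_packing_length_le.
  - intros L HL.
    enough (length L <= (2 * k + Nat.b2n b) + 2)%nat by lia.
    exact (packing_union_length_le _ _ _ (gadget_chain_left_of k b) (gadget_right_of _)
             _ _ (gadget_is_box _) IH (gadget_packing_length_le _) L HL).
Qed.

Lemma gadget_chain_pierces (m : nat) (b : bool) :
  exists P, pierces P (gadget_chain m b) /\ length P = (3 * m + Nat.b2n b)%nat.
Proof.
  induction m as [|k [P [HP Hlen]]]; simpl gadget_chain.
  - exists (if b then [(-2, 0)] else []).
    split; [intros B [-> ->]; exists (-2, 0); split; [simpl; auto | box_arith]|].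
    destruct b; reflexivity.
  - eexists; split.
    + exact (pierces_union _ _ _ _ HP (gadget_pierces _)).
    + rewrite length_app, Hlen; simpl; lia.
Qed.

Lemma gadget_chain_pierces_length_ge (m : nat) (b : bool) (P : list point) :
  pierces P (gadget_chain m b) -> (3 * m + Nat.b2n b <= length P)%nat.
Proof.
  revert P; induction m as [|k IH]; simpl gadget_chain.
  - apply odd_piece_pierces_length_ge.
  - intros P HP.
    enough ((3 * k + Nat.b2n b) + 3 <= length P)%nat by lia.
    exact (pierces_union_length_ge _ _ _ (gadget_chain_left_of k b) (gadget_right_of _)
             _ _ IH (gadget_pierces_length_ge _) P HP).
Qed.

Theorem mainTheorem3 : forall n : nat, (1 <= n)%nat ->
  exists (F : box_family) (c1 c2 : R),
    c1 <> c2 /\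
    (forall B : box, F B -> is_box B) /\
    (forall B : box, F B -> meets_hline B c1 \/ meets_hline B c2) /\
    nu_eq F n /\
    tau_eq F ((3 * n) / 2)%nat.
Proof.
  intros n _.
  set (m := Nat.div2 n); set (b := Nat.odd n).
  assert (Hn : n = (2 * m + Nat.b2n b)%nat) by apply Nat.div2_odd.
  clearbody m b.
  assert (Htau : ((3 * n) / 2)%nat = (3 * m + Nat.b2n b)%nat).
  { symmetry; apply (Nat.div_unique _ _ _ (Nat.b2n b)); destruct b; simpl in *; lia. }
  rewrite Htau, Hn.
  exists (gadget_chain m b), 0, 3.
  split; [lra|]. split; [apply gadget_chain_is_box|].
  split; [apply gadget_chain_meets_hline|]. split; split.
  - destruct (gadget_chain_packing m b) as [L [[HL HD] Hlen]].
    exists L; repeat split; auto.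
    apply pairwise_disjoint_NoDup; [|exact HD].
    eapply Forall_impl; [apply gadget_chain_is_box | exact HL].
  - intros L _ HL HD; exact (gadget_chain_packing_length_le m b L (conj HL HD)).
  - destruct (gadget_chain_pierces m b) as [P [HP Hlen]]; exists P; auto.
  - apply gadget_chain_pierces_length_ge.
Qed.
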